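(* Let $\mathcal{Z}=\{z_1,\dots,z_K\}$, $p_i>0$ with $\sum_i p_i=1$, and $\omega_{ij}=\omega_{ji}\ge0$. Let $G$ be the graph on $\{1,\dots,K\}$ with an edge between $i\neq j$ whenever $\omega_{ij}>0$. Then a function $f:\mathcal{Z}\to\mathbb{R}$ minimizes $$\mathcal{L}_{\omega,\mathrm{disc}}(f)=\sum_{i=1}^K\sum_{j=1}^K p_i\,\omega_{ij}\left[\tanh\!\left(\frac{f(z_i)-f(z_j)}{2}\right)-1\right]^2$$ over all functions $\mathcal{Z}\to\mathbb{R}$ if and only if $f(z_i)-\log p_i$ is constant on each connected component of $G$. In particular, if $G$ is connected, the minimizers are exactly $f(z_i)=\log p_i+C$, $C\in\mathbb{R}$. *)

From HB Require Import structures.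
From mathcomp Require Import all_boot all_order all_algebra.
From mathcomp Require Import all_classical all_reals.
From mathcomp Require Import all_analysis.
Set Implicit Arguments. Unset Strict Implicit. Unset Printing Implicit Defensive.
Import Order.TTheory GRing.Theory Num.Theory.
Local Open Scope ring_scope.

Definition tanh {R : realType} (x : R) : R :=
  (expR x - expR (- x)) / (expR x + expR (- x)).

(* the discrete loss L_{omega,disc}(f); points z_1..z_K indexed by 'I_K *)
Definition Ldisc {R : realType} {K : nat} (p : 'I_K -> R)
  (w : 'I_K -> 'I_K -> R) (f : 'I_K -> R) : R :=
  \sum_(i < K) \sum_(j < K) p i * w i j * (tanh ((f i - f j) / 2) - 1) ^+ 2.

Definition Gadj {R : realType} {K : nat} (w : 'I_K -> 'I_K -> R) : rel 'I_K :=
  fun i j => (i != j) && (0 < w i j).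

Definition Gconnected {R : realType} {K : nat} (w : 'I_K -> 'I_K -> R) : Prop :=
  forall i j : 'I_K, connect (Gadj w) i j.

Definition is_minimizer {R : realType} {K : nat} (p : 'I_K -> R)
  (w : 'I_K -> 'I_K -> R) (f : 'I_K -> R) : Prop :=
  forall g : 'I_K -> R, Ldisc p w f <= Ldisc p w g.

From HB Require Import structures.
From mathcomp Require Import all_boot all_order all_algebra.
From mathcomp Require Import all_classical all_reals.
From mathcomp Require Import all_analysis.
From mathcomp Require Import ring lra.
Set Implicit Arguments.
Unset Strict Implicit.
Unset Printing Implicit Defensive.

Import Order.TTheory GRing.Theory Num.Theory.
Local Open Scope ring_scope.

(* Since tanh(t/2) - 1 = -2/(1 + e^t), pairing the (i,j) and (j,i) terms of
   the loss (w is symmetric) gives, with s = e^(f_i - f_j),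
     w_ij [p_i (2/(1+s))^2 + p_j (2s/(1+s))^2]
       = 4 w_ij p_i p_j/(p_i+p_j) + 4 w_ij (p_i - p_j s)^2/((p_i+p_j)(1+s)^2).
   The first summand does not depend on f and the second is nonnegative and
   vanishes iff w_ij = 0 or f_i - log p_i = f_j - log p_j.  So f = log p
   attains the lower bound, and the minimizers are exactly the f for which
   f - log p is constant along every edge of G, i.e. on every component. *)

Lemma tanh_half_subr1 (R : realType) (x : R) :
  tanh (x / 2) - 1 = - 2 / (1 + expR x).
Proof.
rewrite /tanh expRN.
have -> : expR x = expR (x / 2) * expR (x / 2).
  by rewrite -expRD; congr expR; field.
have e_gt0 := expR_gt0 (x / 2); set e := expR (x / 2) in e_gt0 *.
have e_neq0 : e != 0 by rewrite gt_eqF.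
have den_neq0 : 1 + e * e != 0 by rewrite gt_eqF // addr_gt0 // mulr_gt0.
have sum_neq0 : e + e^-1 != 0 by rewrite gt_eqF // addr_gt0 // invr_gt0.
by field; rewrite e_neq0 den_neq0.
Qed.

Lemma weighted_logistic_pair (R : realType) (a b s : R) :
  0 < a -> 0 < b -> 0 < s ->
  a * (- 2 / (1 + s)) ^+ 2 + b * (- 2 / (1 + s^-1)) ^+ 2
  = 4 * (a * b / (a + b)) + 4 * (a - b * s) ^+ 2 / ((a + b) * (1 + s) ^+ 2).
Proof.
move=> a_gt0 b_gt0 s_gt0.
have s_neq0 : s != 0 by rewrite gt_eqF.
have s1_neq0 : 1 + s != 0 by rewrite gt_eqF // addr_gt0.
have ab_neq0 : a + b != 0 by rewrite gt_eqF // addr_gt0.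
have -> : 1 + s^-1 = (1 + s) / s by field.
by field; rewrite s_neq0 s1_neq0 ab_neq0.
Qed.

Lemma connect_invariantP (T : finType) (e : rel T) (U : Type) (g : T -> U) :
  (forall x y, e x y -> g x = g y) <-> (forall x y, connect e x y -> g x = g y).
Proof.
split=> [g_e x y /connectP [s] | g_connect x y exy]; last exact/g_connect/connect1.
elim: s x => [|z s IHs] x /=; first by move=> _ ->.
by case/andP=> exz zs y_last; rewrite (g_e x z exz) (IHs z zs y_last).
Qed.

Lemma connected_invariant_const (T : finType) (e : rel T) (U : pointedType)
    (g : T -> U) :
  (forall x y, connect e x y) ->
  (forall x y, connect e x y -> g x = g y) <-> exists c, forall x, g x = c.
Proof.
move=> e_connected; split=> [g_connect | [c g_c] x y _]; last by rewrite !g_c.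
have [x0 _|T_empty] := pickP T; first by exists (g x0) => x; exact: g_connect.
by exists point => x; move: (T_empty x).
Qed.

Section DiscreteLoss.
Variables (R : realType) (K : nat) (p : 'I_K -> R) (w : 'I_K -> 'I_K -> R).
Hypotheses (p_gt0 : forall i, 0 < p i) (w_sym : forall i j, w i j = w j i)
  (w_ge0 : forall i j, 0 <= w i j).

Definition loss_term (f : 'I_K -> R) i j :=
  p i * w i j * (tanh ((f i - f j) / 2) - 1) ^+ 2.

Definition loss_floor_term i j := 4 * (w i j * (p i * p j / (p i + p j))).

Definition pair_excess (f : 'I_K -> R) i j :=
  loss_term f i j + loss_term f j i - loss_floor_term i j.

Definition total_excess (f : 'I_K -> R) :=
  \sum_(i < K) \sum_(j < K) pair_excess f i j.

Lemma pair_excessE f i j : pair_excess f i j =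
  w i j * (4 * (p i - p j * expR (f i - f j)) ^+ 2 /
           ((p i + p j) * (1 + expR (f i - f j)) ^+ 2)).
Proof.
rewrite /pair_excess /loss_term /loss_floor_term !tanh_half_subr1 -(w_sym i j).
rewrite -[f j - f i]opprB expRN.
have := weighted_logistic_pair (p_gt0 i) (p_gt0 j) (expR_gt0 (f i - f j)).
set A := _ + _ => pair_eq.
transitivity (w i j * (A - 4 * (p i * p j / (p i + p j)))); first by rewrite /A; ring.
by rewrite pair_eq; ring.
Qed.

Lemma pair_excess_ge0 f i j : 0 <= pair_excess f i j.
Proof.
rewrite pair_excessE mulr_ge0 // divr_ge0 // mulr_ge0 ?sqr_ge0 //.
by rewrite addr_ge0 // ltW.
Qed.

Lemma pair_excess_eq0 f i j : pair_excess f i j = 0 <->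
  w i j = 0 \/ f i - ln (p i) = f j - ln (p j).
Proof.
have den_gt0 : 0 < (p i + p j) * (1 + expR (f i - f j)) ^+ 2.
  by rewrite mulr_gt0 ?addr_gt0 ?exprn_gt0 ?addr_gt0 ?expR_gt0.
rewrite pair_excessE; split=> [/eqP | [-> | f_eq]]; [| by rewrite mul0r |].
- rewrite 3!mulf_eq0 invr_eq0 (gt_eqF den_gt0) orbF sqrf_eq0 subr_eq0.
  case/or3P=> [/eqP| /eqP four0 | /eqP p_eq]; [by left | by move: four0; lra |].
  right; suff -> : ln (p i) = ln (p j) + (f i - f j) by ring.
  by rewrite p_eq lnM ?expRK // posrE ?expR_gt0.
- suff -> : p j * expR (f i - f j) = p i by rewrite subrr expr0n /= mulr0 mul0r mulr0.
  have -> : f i - f j = ln (p i) - ln (p j) by lra.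
  by rewrite expRD expRN !lnK ?posrE // mulrCA divff ?mulr1 // gt_eqF.
Qed.

(* Each unordered pair {i, j} is counted twice on both sides. *)
Lemma Ldisc_double f : Ldisc p w f + Ldisc p w f =
  total_excess f + \sum_(i < K) \sum_(j < K) loss_floor_term i j.
Proof.
rewrite {2}/Ldisc exchange_big /Ldisc -big_split -big_split /=.
apply: eq_bigr => i _; rewrite -!big_split; apply: eq_bigr => j _ /=.
by rewrite /pair_excess /loss_term; ring.
Qed.

Lemma total_excess_ge0 f : 0 <= total_excess f.
Proof. by do 2![apply: sumr_ge0 => ? _]; exact: pair_excess_ge0. Qed.

Lemma total_excess_eq0 f : total_excess f = 0 <->
  forall i j, w i j = 0 \/ f i - ln (p i) = f j - ln (p j).
Proof.
split=> [excess0 i j | f_eq]; last first.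
  by do 2![apply: big1 => ? _]; exact/pair_excess_eq0.
apply/pair_excess_eq0.
have row_ge0 k : predT k -> 0 <= \sum_(l < K) pair_excess f k l.
  by move=> _; apply: sumr_ge0 => l _; exact: pair_excess_ge0.
have row0 := psumr_eq0P row_ge0 excess0 (isT : predT i).
exact: (psumr_eq0P (P := predT) (fun l _ => pair_excess_ge0 f i l) row0 (isT : predT j)).
Qed.

Lemma is_minimizerE f : is_minimizer p w f <-> total_excess f = 0.
Proof.
have ln_p_excess0 : total_excess (fun i => ln (p i)) = 0.
  by apply/total_excess_eq0 => i j; right; rewrite !subrr.
have := Ldisc_double f; have := total_excess_ge0 f.
split=> [f_min | f_excess0 g]; last first.
  by have := Ldisc_double g; have := total_excess_ge0 g; lra.
by have := f_min (fun i => ln (p i)); have := Ldisc_double (fun i => ln (p i)); lra.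
Qed.

Lemma is_minimizer_edgeP f : is_minimizer p w f <->
  forall i j, Gadj w i j -> f i - ln (p i) = f j - ln (p j).
Proof.
rewrite is_minimizerE total_excess_eq0; split=> f_eq i j.
  by case/andP=> _ w_gt0; case: (f_eq i j) => // w0; move: w_gt0; rewrite w0 ltxx.
have [-> | i_neq_j] := eqVneq i j; first by right.
have [w_gt0 | w_le0] := ltP 0 (w i j); last by left; apply/le_anti; rewrite w_le0 w_ge0.
by right; apply: f_eq; rewrite /Gadj i_neq_j.
Qed.

End DiscreteLoss.

Theorem mainTheorem5 (R : realType) (K : nat) (p : 'I_K -> R)
  (w : 'I_K -> 'I_K -> R)
  (hp : forall i, 0 < p i) (hsum : \sum_(i < K) p i = 1)
  (hsym : forall i j, w i j = w j i) (hw : forall i j, 0 <= w i j) :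
  (forall f : 'I_K -> R,
     is_minimizer p w f <->
     (forall i j, connect (Gadj w) i j -> f i - ln (p i) = f j - ln (p j))) /\
  (Gconnected w -> forall f : 'I_K -> R,
     is_minimizer p w f <-> exists C : R, forall i, f i = ln (p i) + C).
Proof.
have minimizerP f : is_minimizer p w f <->
    (forall i j, connect (Gadj w) i j -> f i - ln (p i) = f j - ln (p j)).
  by rewrite (is_minimizer_edgeP hp hsym hw);
    exact: (connect_invariantP _ (fun i => f i - ln (p i))).
split=> // G_connected f; rewrite minimizerP.
rewrite (connected_invariant_const (fun i => f i - ln (p i)) G_connected).
by split=> -[C f_eq]; exists C => i; move: (f_eq i); lra.
Qed.
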